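(* For every $l\ge1$ and every positive integer $K$, $$\limsup_{n\to\infty} f(n)^{1/n}\le c_{l,K}\cdot 2^{\eta_{l,K}},$$ where $$c_{l,K}=\prod_{i=1}^K r_l(i)^{\frac{2}{i(i+1)}\prod_{j=1}^l(1-1/p_j)},\qquad \eta_{l,K}=2-\sum_{i=1}^K\frac{2}{i(i+1)}\prod_{j=1}^l\left(1-\frac1{p_j}\right)|M_l(i)|.$$
   Context: A set of positive integers is primitive if no element divides another. $f(n)$ is the number of $n$-element primitive subsets of $\{1,\dots,2n\}$. Let $p_1<p_2<\dots$ be the primes. $M_l$ is the set of positive integers all of whose prime factors lie in $\{p_1,\dots,p_l\}$, $M_l(x)=\{m\in M_l:m\le x\}$ ordered by divisibility, and $r_l(i)$ denotes the total number of maximum-size antichains of $M_l(i)$. *)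

From Stdlib Require Import Reals.
From mathcomp Require Import all_boot.

Set Implicit Arguments.
Unset Strict Implicit.
Unset Printing Implicit Defensive.

Lemma exists_prime_above (p : nat) : exists q, (p < q) && prime q.
Proof. case: (prime_above p) => q H1 H2; exists q; by rewrite H1 H2. Qed.

Definition next_prime (p : nat) : nat := ex_minn (exists_prime_above p).

(* nth_prime0 k = p_{k+1}  (0-indexed: nth_prime0 0 = 2) *)
Fixpoint nth_prime0 (k : nat) : nat :=
  match k with
  | 0 => 2
  | k'.+1 => next_prime (nth_prime0 k')
  end.

(* p_j for j >= 1 (1-indexed, as in the paper) *)
Definition p_ (j : nat) : nat := nth_prime0 j.-1.

Definition primitive_nat (A : seq nat) : bool :=
  all (fun x => all (fun y => (x %| y) ==> (x == y)) A) A.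

(* Subsets of {1,...,2n} are encoded as subsets of 'I_(2n) via i |-> i+1. *)
Definition to_nats (N : nat) (A : {set 'I_N}) : seq nat :=
  [seq (val i).+1 | i in A].

Definition f_prim (n : nat) : nat :=
  #|[set A : {set 'I_(n.*2)} | (#|A| == n) && primitive_nat (to_nats A)]|.

Definition in_M (l m : nat) : bool :=
  (0 < m) && all (fun q => q \in [seq p_ j | j <- iota 1 l]) (primes m).

(* M_l(i) encoded as a subset of 'I_(i+1) (element k represents integer k) *)
Definition Mset (l i : nat) : {set 'I_i.+1} := [set k : 'I_i.+1 | in_M l k].

Definition antichain (l i : nat) (A : {set 'I_i.+1}) : bool :=
  (A \subset Mset l i) && primitive_nat [seq val k | k in A].

Definition width (l i : nat) : nat :=
  \max_(A : {set 'I_i.+1} | antichain l A) #|A|.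

Definition r_ (l i : nat) : nat :=
  #|[set A : {set 'I_i.+1} | antichain l A && (#|A| == width l i)]|.

Definition card_M (l i : nat) : nat := #|Mset l i|.

Local Open Scope R_scope.

(* \prod_{k = a}^{b} F k  over reals (empty product = 1) *)
Definition Rprod (a b : nat) (F : nat -> R) : R :=
  foldr Rmult 1 (map F (iota a (S b - a))).

Definition Rsum (a b : nat) (F : nat -> R) : R :=
  foldr Rplus 0 (map F (iota a (S b - a))).

Definition phi_l (l : nat) : R := Rprod 1 l (fun j => 1 - / INR (p_ j)).

Definition c_ (l K : nat) : R :=
  Rprod 1 K (fun i => Rpower (INR (r_ l i)) (2 / (INR i * (INR i + 1)) * phi_l l)).

Definition eta_ (l K : nat) : R :=
  2 - Rsum 1 K (fun i => 2 / (INR i * (INR i + 1)) * phi_l l * INR (card_M l i)).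

Definition limsup_le (a : nat -> R) (L : R) : Prop :=
  forall eps : R, 0 < eps -> exists N : nat, forall n : nat, (N <= n)%nat -> a n <= L + eps.

(* Write every x <= 2n as x = s m with s in M_l and m coprime to p_1 ... p_l. For a primitive
   n-subset A of {1, ..., 2n} and each such cofactor m, the fibre {s in M_l : s m \in A} is an
   antichain of M_l(2n/m). Equal odd parts would force divisibility, so the odd parts of the
   elements of A are n distinct odd numbers, i.e. all odd numbers up to 2n. As m is odd, taking
   odd parts maps the fibre onto the odd elements of M_l(2n/m), and the same map injects any
   antichain into them: each fibre is a maximum antichain. As A is determined by
   its fibres, f(n) <= prod_m r_l(2n/m). Every factor with 2n/m > K is bounded by
   2^|M_l(2n/m)|, and these exponents add up to at most 2n because the classes
   {x : x_pi' = m} partition {1, ..., 2n}; so f(n) <= prod_(i <= K) r_l(i)^C_i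
   * 2^(2n - sum_(i <= K) C_i |M_l(i)|), where C_i counts the cofactors m with 2n/m = i.
   Since r_l(i) <= 2^|M_l(i)|, only a lower bound on C_i is needed, and C_i is at least
   2n prod_j (1 - 1/p_j) / (i (i+1)) - O(1) by periodicity of coprimality to p_1 ... p_l.
   Taking logarithms and n-th roots gives the bound. *)

From HB Require Import structures.
From Stdlib Require Import Reals Lra.
From mathcomp Require Import all_boot zify.

Set Implicit Arguments.
Unset Strict Implicit.
Unset Printing Implicit Defensive.

(** * Primes and the primorial *)

Lemma next_primeP p : p < next_prime p /\ prime (next_prime p).
Proof. by rewrite /next_prime; case: ex_minnP => m /andP[]. Qed.

Lemma prime_nth_prime0 k : prime (nth_prime0 k).
Proof. by case: k => [|k] //=; exact: (next_primeP _).2. Qed.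

Lemma ltn_nth_prime0 j k : j < k -> nth_prime0 j < nth_prime0 k.
Proof.
elim: k => [|k IH] //; rewrite ltnS leq_eqVlt => /orP[/eqP->|/IH lt_jk] /=.
  exact: (next_primeP _).1.
exact: ltn_trans lt_jk (next_primeP _).1.
Qed.

Lemma nth_prime0_inj : injective nth_prime0.
Proof.
by move=> j k e; case: (ltngtP j k) => // /ltn_nth_prime0; rewrite e ltnn.
Qed.

Definition first_primes l := [seq p_ j | j <- iota 1 l].

Lemma all_prime_first_primes l : all prime (first_primes l).
Proof. by apply/allP => q /mapP[j _ ->]; exact: prime_nth_prime0. Qed.

Lemma uniq_first_primes l : uniq (first_primes l).
Proof.
rewrite map_inj_in_uniq ?iota_uniq // => j k.
rewrite !mem_iota /p_ => /andP[j1 _] /andP[k1 _] /nth_prime0_inj; lia.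
Qed.

Lemma two_in_first_primes l : 0 < l -> 2 \in first_primes l.
Proof. by move=> l_gt0; apply/mapP; exists 1; rewrite // mem_iota; lia. Qed.

Definition pi_M l : nat_pred := [pred q | q \in first_primes l].

Lemma in_ME l m : in_M l m = (pi_M l).-nat m.
Proof. by []. Qed.

Lemma in_M_gt0 l m : in_M l m -> 0 < m.
Proof. by case/andP. Qed.

Definition primorial l := \prod_(p <- first_primes l) p.

Lemma primorial_pnat l : (pi_M l).-nat (primorial l).
Proof.
rewrite /primorial big_seq; apply: (big_ind (pnat (pi_M l))) => [//|x y|p pM].
  by rewrite pnatM => ->.
have /allP/(_ p pM) p_pr := all_prime_first_primes l.
by rewrite pnatE.
Qed.

Lemma primorial_gt0 l : 0 < primorial l.
Proof. by case/andP: (primorial_pnat l). Qed.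

Lemma dvd2_primorial l : 0 < l -> 2 %| primorial l.
Proof.
by move=> l_gt0; rewrite /primorial (big_rem _ (two_in_first_primes l_gt0)) dvdn_mulr.
Qed.

Lemma coprime_primorialE l m : 0 < m -> coprime (primorial l) m = (pi_M l)^'.-nat m.
Proof.
move=> m_gt0; apply/idP/idP; last exact/pnat_coprime/primorial_pnat.
move=> co; apply/pnatP => // p p_pr p_dvd_m; apply/negP => /= pM.
have p_dvd : p %| primorial l by rewrite /primorial (big_rem _ pM) dvdn_mulr.
by have := coprime_dvdl p_dvd co; rewrite prime_coprime // p_dvd_m.
Qed.

Lemma totient_prod_primes (s : seq nat) : all prime s -> uniq s ->
  totient (\prod_(p <- s) p) = \prod_(p <- s) p.-1.
Proof.
elim: s => [|q s IH]; first by rewrite !big_nil.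
rewrite /= => /andP[q_pr s_pr] /andP[q_s s_uniq]; rewrite !big_cons totient_coprime.
  by rewrite totient_prime // IH.
rewrite prime_coprime // Euclid_dvd_prod // big_has; apply/hasPn => p p_s.
by rewrite dvdn_prime2 ?(allP s_pr p p_s) //; apply: contraNneq q_s => ->.
Qed.



(** * Primitive sets and odd parts *)

Lemma primitive_natP (s : seq nat) :
  reflect {in s &, forall x y, x %| y -> x = y} (primitive_nat s).
Proof.
apply: (iffP allP) => [prim x y xs ys dvd_xy|prim x xs].
  by move/allP: (prim x xs) => /(_ y ys); rewrite dvd_xy => /eqP.
by apply/allP => y ys; apply/implyP => dvd_xy; apply/eqP/prim.
Qed.

Lemma leq_part pi x : 0 < x -> x`_pi <= x.
Proof. by move=> x_gt0; apply/dvdn_leq/dvdn_part. Qed.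

Lemma odd_odd_part x : odd x`_2^'.
Proof. by rewrite odd_2'nat part_pnat. Qed.

Lemma odd_part_dvd_or x y : 0 < x -> 0 < y -> x`_2^' = y`_2^' -> (x %| y) || (y %| x).
Proof.
move=> x_gt0 y_gt0 e; rewrite -(partnC 2 x_gt0) -(partnC 2 y_gt0) e !p_part.
rewrite !dvdn_pmul2r ?part_gt0 // !dvdn_Pexp2l //.
by case: leqP => // /ltnW ->.
Qed.

Lemma primitive_odd_part_inj (s : seq nat) : primitive_nat s -> {in s, forall x, 0 < x} ->
  {in s &, injective (fun x => x`_2^')}.
Proof.
move=> /primitive_natP prim s_gt0 x y xs ys e.
case/orP: (odd_part_dvd_or (s_gt0 x xs) (s_gt0 y ys) e) => [|/prim-> //]; exact: prim.
Qed.

Lemma mem_valP a (C : {set 'I_a}) (x : nat) :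
  reflect (exists2 k, k \in C & x = k) (x \in [seq val k | k in C]).
Proof.
by apply: (iffP mapP) => [[k]|[k]]; rewrite ?mem_enum => kC ->; exists k; rewrite ?mem_enum.
Qed.

Lemma to_natsP N (A : {set 'I_N}) x :
  reflect (exists2 i, i \in A & x = i.+1) (x \in to_nats A).
Proof.
by apply: (iffP mapP) => [[k]|[k]]; rewrite ?mem_enum => kA ->; exists k; rewrite ?mem_enum.
Qed.

Lemma to_nats_bnd N (A : {set 'I_N}) x : x \in to_nats A -> 0 < x <= N.
Proof. by case/to_natsP => i _ ->; rewrite ltn_ord. Qed.

Lemma mem_to_nats N (A : {set 'I_N}) (i : 'I_N) : (i.+1 \in to_nats A) = (i \in A).
Proof.
by apply/to_natsP/idP => [[j jA [/val_inj->]]|iA] //; exists i.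
Qed.

Lemma card_odd_succ n : #|[set j : 'I_n.*2 | odd j.+1]| = n.
Proof.
rewrite -sum1_card big_mkcond /=.
under eq_bigr => i _ do rewrite inE.
rewrite -(big_mkord xpredT (fun j => if ~~ odd j then 1 else 0)).
elim: n => [|n IH]; first by rewrite big_geq.
by rewrite doubleS !big_nat_recr //= IH /= odd_double /=; lia.
Qed.

Lemma primitive_odd_part_surj n (A : {set 'I_n.*2}) y :
  #|A| = n -> primitive_nat (to_nats A) -> odd y -> 0 < y <= n.*2 ->
  exists2 x, x \in to_nats A & x`_2^' = y.
Proof.
move=> cardA prim odd_y /andP[y_gt0 y_le].
pose h (i : 'I_n.*2) : 'I_n.*2 := insubd i (i.+1`_2^').-1.
have hE i : h i = (i.+1`_2^').-1 :> nat.
  rewrite val_insubd ifT //; have := leq_part 2^' (ltn0Sn i).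
  by have := part_gt0 2^' i.+1; have := ltn_ord i; lia.
have h_inj : {in A &, injective h}.
  move=> i j iA jA /(congr1 val); rewrite /= !hE => e; apply/val_inj/succn_inj.
  have e2 : i.+1`_2^' = j.+1`_2^'.
    by move: e; have := part_gt0 2^' i.+1; have := part_gt0 2^' j.+1; lia.
  apply: (primitive_odd_part_inj prim) e2; rewrite ?mem_to_nats //.
  by move=> z /to_natsP[k _ ->].
set O := [set j : 'I_n.*2 | odd j.+1].
have hA : h @: A = O.
  apply/eqP; rewrite eqEcard (card_in_imset h_inj) cardA card_odd_succ leqnn andbT.
  by apply/subsetP => _ /imsetP[i _ ->]; rewrite inE hE prednK ?part_gt0 ?odd_odd_part.
have y1_lt : y.-1 < n.*2 by lia.
have : Ordinal y1_lt \in O by rewrite inE prednK.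
rewrite -hA => /imsetP[i iA /(congr1 val)]; rewrite /= hE => e.
exists i.+1; first by rewrite mem_to_nats.
by move: e; have := part_gt0 2^' i.+1; lia.
Qed.

Lemma f_prim_gt0 n : 0 < f_prim n.
Proof.
have top_lt (k : 'I_n) : n + k < n.*2 by rewrite -addnn ltn_add2l.
pose top k := Ordinal (top_lt k).
rewrite card_gt0; apply/set0Pn; exists [set top k | k : 'I_n]; rewrite inE.
rewrite card_imset ?card_ord ?eqxx /=; last by move=> j k [/addnI/val_inj].
apply/primitive_natP => _ _ /to_natsP[_ /imsetP[i _ ->] ->] /to_natsP[_ /imsetP[j _ ->] ->].
move=> /= /dvdnP[k ejk]; have := ltn_ord i; have := ltn_ord j.
by case: k ejk => [|[|k]] ejk; [rewrite mul0n in ejk | rewrite mul1n in ejk | nia].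
Qed.

(** * Antichains of M_l(i) and fibres of primitive sets *)

Lemma in_M_mul l a b : in_M l (a * b) = in_M l a && in_M l b.
Proof. by rewrite !in_ME pnatM. Qed.

Lemma in_M_odd_part l k : in_M l k -> in_M l k`_2^'.
Proof. by rewrite !in_ME; apply/pnat_dvd/dvdn_part. Qed.

Lemma in_M_two_part l x : 0 < l -> in_M l x`_2.
Proof.
move=> l_gt0; rewrite in_ME; apply: sub_in_pnat (part_pnat 2 x) => p _.
by rewrite !inE => /eqP->; exact: two_in_first_primes.
Qed.

Definition odd_M l i : {set 'I_i.+1} := [set k : 'I_i.+1 | odd k && in_M l k].

Definition odd_part_ord i (k : 'I_i.+1) : 'I_i.+1 := inord k`_2^'.

Lemma odd_part_ordE i (k : 'I_i.+1) : 0 < k -> odd_part_ord k = k`_2^' :> nat.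
Proof. by move=> k_gt0; rewrite inordK // ltnS (leq_trans (leq_part _ k_gt0)) // -ltnS. Qed.

Section Antichain.

Variables (l i : nat) (C : {set 'I_i.+1}).
Hypothesis antiC : antichain l C.

Lemma antichain_in_M k : k \in C -> in_M l k.
Proof. by case/andP: antiC => /subsetP subC _ /subC; rewrite inE. Qed.

Lemma antichain_odd_part_inj : {in C &, injective (@odd_part_ord i)}.
Proof.
have [_ prim] := andP antiC.
move=> x y xC yC e; have x_gt0 := in_M_gt0 (antichain_in_M xC).
have y_gt0 := in_M_gt0 (antichain_in_M yC).
apply/val_inj/(primitive_odd_part_inj prim).
- by move=> z /mem_valP[k /antichain_in_M/in_M_gt0 ? ->].
- by apply/mem_valP; exists x.
- by apply/mem_valP; exists y.
by rewrite -odd_part_ordE // e odd_part_ordE.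
Qed.

Lemma antichain_odd_part_sub : @odd_part_ord i @: C \subset odd_M l i.
Proof.
apply/subsetP => _ /imsetP[k kC ->]; have kM := antichain_in_M kC.
by rewrite inE odd_part_ordE ?(in_M_gt0 kM) // odd_odd_part in_M_odd_part.
Qed.

Lemma card_antichain_le : #|C| <= #|odd_M l i|.
Proof.
rewrite -(card_in_imset antichain_odd_part_inj).
exact: subset_leq_card antichain_odd_part_sub.
Qed.

End Antichain.

Lemma width_le_odd_M l i : width l i <= #|odd_M l i|.
Proof. by apply/bigmax_leqP => C; apply: card_antichain_le. Qed.

Lemma r_le l i : r_ l i <= 2 ^ card_M l i.
Proof.
rewrite /r_ /card_M -card_powerset; apply/subset_leq_card/subsetP => A.
by rewrite !inE => /andP[/andP[]].
Qed.

Lemma r_gt0 l i : 0 < r_ l i.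
Proof.
have anti0 : antichain l (set0 : {set 'I_i.+1}).
  by rewrite /antichain sub0set; apply/primitive_natP => x y /mem_valP[k]; rewrite inE.
have ne : 0 < #|[pred C : {set 'I_i.+1} | antichain l C]| by apply/card_gt0P; exists set0.
have [C antiC e] := eq_bigmax_cond (fun C : {set 'I_i.+1} => #|C|) ne.
by rewrite /r_ card_gt0; apply/set0Pn; exists C; rewrite inE -e /width eqxx andbT.
Qed.

Definition is_cofactor l m := (0 < m) && coprime (primorial l) m.

Definition fibre l N (A : {set 'I_N}) m i : {set 'I_i.+1} :=
  [set k : 'I_i.+1 | (k * m \in to_nats A) && in_M l k].

Definition max_antichains l i : {set {set 'I_i.+1}} :=
  [set C | antichain l C && (#|C| == width l i)].

Lemma fibre_max_antichain l n (A : {set 'I_n.*2}) m :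
  0 < l -> #|A| = n -> primitive_nat (to_nats A) -> is_cofactor l m ->
  fibre l A m (n.*2 %/ m) \in max_antichains l (n.*2 %/ m).
Proof.
move=> l_gt0 cardA prim /andP[m_gt0 co]; set i := n.*2 %/ m; set B := fibre l A m i.
have antiB : antichain l B.
  rewrite /antichain; apply/andP; split; first by apply/subsetP => k; rewrite !inE => /andP[].
  apply/primitive_natP => _ _ /mem_valP[x + ->] /mem_valP[y + ->].
  rewrite !inE => /andP[xA _] /andP[yA _] dvd_xy.
  have /eqP : x * m = y * m :> nat by apply: (primitive_natP _ prim) => //; exact: dvdn_mul.
  by rewrite eqn_mul2r eqn0Ngt m_gt0 => /eqP.
rewrite inE antiB eqn_leq leq_bigmax_cond //=.
apply: leq_trans (width_le_odd_M l i) _.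
rewrite -(card_in_imset (antichain_odd_part_inj antiB)); apply/subset_leq_card/subsetP => o.
rewrite inE => /andP[odd_o oM]; have o_gt0 := in_M_gt0 oM.
have odd_m : odd m by rewrite -coprime2n (coprime_dvdl (dvd2_primorial l_gt0) co).
have om_le : o * m <= n.*2 by rewrite -leq_divRL // -ltnS.
have [x xA ex] : exists2 x, x \in to_nats A & x`_2^' = o * m.
  apply: (primitive_odd_part_surj cardA prim).
    by rewrite oddM odd_o odd_m.
  by rewrite muln_gt0 o_gt0 m_gt0.
have x_gt0 : 0 < x by have := to_nats_bnd xA; lia.
have ek : x`_2 * o * m = x by rewrite -mulnA -ex partnC.
have k_lt : x`_2 * o < i.+1 by rewrite ltnS leq_divRL // ek; have := to_nats_bnd xA; lia.
apply/imsetP; exists (Ordinal k_lt); first by rewrite inE /= ek xA in_M_mul in_M_two_part.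
apply: val_inj; rewrite /= odd_part_ordE ?muln_gt0 ?part_gt0 //=.
rewrite partnM ?part_gt0 // part_p'nat ?pnatNK ?part_pnat // mul1n.
by rewrite part_pnat_id // -odd_2'nat.
Qed.

Definition widen_set i N (le_iN : i <= N) (C : {set 'I_i.+1}) : {set 'I_N.+1} :=
  [set @widen_ord i.+1 N.+1 le_iN k | k in C].

Lemma fibre_widen l N (A : {set 'I_N}) m : 0 < m ->
  fibre l A m N = widen_set (leq_div N m) (fibre l A m (N %/ m)).
Proof.
move=> m_gt0; apply/setP => k; rewrite inE; apply/idP/imsetP => [/andP[kA kM]|[j + ->]].
  have k_lt : k < (N %/ m).+1 by rewrite ltnS leq_divRL //; have := to_nats_bnd kA; lia.
  by exists (Ordinal k_lt); rewrite ?inE ?kA //; apply: val_inj.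
by rewrite inE.
Qed.

Lemma is_cofactor_part l x : 0 < x -> is_cofactor l x`_(pi_M l)^'.
Proof. by move=> x_gt0; rewrite /is_cofactor part_gt0 coprime_primorialE ?part_gt0 ?part_pnat. Qed.

Lemma f_prim_le n l : 0 < l ->
  f_prim n <= \prod_(m < n.*2.+1 | is_cofactor l m) r_ l (n.*2 %/ m).
Proof.
move=> l_gt0; set N := n.*2.
set V := [set A : {set 'I_N} | (#|A| == n) && primitive_nat (to_nats A)].
pose Phi (A : {set 'I_N}) : {ffun 'I_N.+1 -> {set 'I_N.+1}} :=
  [ffun m : 'I_N.+1 => if is_cofactor l m then fibre l A m N else set0].
pose F (m : 'I_N.+1) : pred {set 'I_N.+1} := [pred B | if is_cofactor l m
  then B \in widen_set (leq_div N m) @: max_antichains l (N %/ m)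
  else B == set0].
have Phi_inj : {in V &, injective Phi}.
  move=> A A' _ _ /ffunP e; apply/setP => j; rewrite -!mem_to_nats.
  have x_gt0 : 0 < j.+1 by [].
  have m_lt : j.+1`_(pi_M l)^' < N.+1 by rewrite ltnS (leq_trans (leq_part _ x_gt0)).
  have s_lt : j.+1`_(pi_M l) < N.+1 by rewrite ltnS (leq_trans (leq_part _ x_gt0)).
  have := e (Ordinal m_lt); rewrite !ffunE is_cofactor_part // => /setP/(_ (Ordinal s_lt)).
  by rewrite !inE /= partnC // in_ME part_pnat !andbT.
have PhiV : Phi @: V \subset family F.
  apply/subsetP => f /imsetP[A]; rewrite inE => /andP[/eqP cardA prim] ->.
  apply/familyP => m; rewrite /F /Phi ffunE inE; case cof: (is_cofactor l m) => //.
  rewrite fibre_widen; last by case/andP: cof.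
  by apply: imset_f; apply: fibre_max_antichain.
have -> : f_prim n = #|V| by [].
rewrite -(card_in_imset Phi_inj); apply: leq_trans (subset_leq_card PhiV) _.
rewrite card_family foldrE big_map big_enum /= [X in _ <= X]big_mkcond /=.
apply: leq_prod => m _; rewrite /F; case: ifP => _.
  exact: leq_imset_card.
by rewrite (eq_card (B := pred1 set0)) ?card1.
Qed.

(** * Counting cofactors *)

Lemma card_M_le_cofactor_class l N m : is_cofactor l m ->
  card_M l (N %/ m) <= #|[set x : 'I_N | x.+1`_(pi_M l)^' == m]|.
Proof.
case/andP=> m_gt0 co; have [lt_Nm|le_mN] := ltnP N m.
  by rewrite /card_M divn_small // (eq_card (B := pred0)) ?card0 // => k; rewrite !inE ord1.
have m1_lt : m.-1 < N by lia.
pose g (k : 'I_(N %/ m).+1) : 'I_N := insubd (Ordinal m1_lt) (k * m).-1.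
have gE (k : 'I_(N %/ m).+1) : in_M l k -> nat_of_ord (g k) = (k * m).-1.
  move=> /in_M_gt0 k_gt0; rewrite val_insubd ifT //.
  by have := ltn_ord k; rewrite ltnS leq_divRL //; have := muln_gt0 k m; rewrite k_gt0 m_gt0; lia.
have g_inj : {in Mset l (N %/ m) &, injective g}.
  move=> a b; rewrite !inE => aM bM /(congr1 val); rewrite /= !gE //.
  have := muln_gt0 a m; have := muln_gt0 b m; rewrite (in_M_gt0 aM) (in_M_gt0 bM) m_gt0 /=.
  move=> ? ? /eqP; rewrite -eqSS !prednK // eqn_mul2r eqn0Ngt m_gt0 /=.
  by move/eqP/val_inj.
rewrite /card_M -(card_in_imset g_inj); apply/subset_leq_card/subsetP => x /imsetP[k].
rewrite !inE => kM ->; have k_gt0 := in_M_gt0 kM.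
rewrite gE // prednK ?muln_gt0 ?k_gt0 // partnM // part_p'nat ?pnatNK -?in_ME //.
by rewrite mul1n part_pnat_id // -coprime_primorialE.
Qed.

Lemma sum_card_M_le l N : \sum_(m < N.+1 | is_cofactor l m) card_M l (N %/ m) <= N.
Proof.
pose cof (x : 'I_N) : 'I_N.+1 := inord x.+1`_(pi_M l)^'.
have cofE x : cof x = x.+1`_(pi_M l)^' :> nat.
  by rewrite inordK // ltnS (leq_trans (leq_part _ (ltn0Sn _))).
rewrite -[X in _ <= X]card_ord -sum1_card (partition_big cof predT) //=.
rewrite [X in _ <= X](bigID (fun m : 'I_N.+1 => is_cofactor l m)) /=.
apply: leq_trans (leq_addr _ _).
apply: leq_sum => m cof_m; rewrite sum1_card.
apply: leq_trans (card_M_le_cofactor_class N cof_m) _; apply/eq_leq/eq_card => x.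
by rewrite inE unfold_in /= cofE.
Qed.

Definition cofactor_count l N j := #|[set m : 'I_N.+1 | is_cofactor l m && (N %/ m == j)]|.

Lemma big_cofactor_quotient (R : Type) (idx : R) (op : Monoid.com_law idx) l N K
    (F : nat -> R) :
  \big[op/idx]_(m < N.+1 | is_cofactor l m && (N %/ m <= K)) F (N %/ m) =
  \big[op/idx]_(j <- iota 1 K) \big[op/idx]_(m < N.+1 | is_cofactor l m && (N %/ m == j)) F j.
Proof.
have iotaE : iota 1 K = [seq j <- index_iota 0 K.+1 | 0 < j].
  by rewrite /index_iota subn0 /=; apply/esym/all_filterP/allP => j; rewrite mem_iota => /andP[].
rewrite iotaE big_filter big_mkord.
rewrite (partition_big (fun m : 'I_N.+1 => inord (N %/ m) : 'I_K.+1) (fun j : 'I_K.+1 => 0 < j)).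
  apply: eq_bigr => j j_gt0; apply: eq_big => [m|m /andP[/andP[_ le_K] /eqP <-]].
    case: (is_cofactor l m) => //=; have := ltn_ord j; rewrite ltnS => j_le.
    case: leqP => [le_K|lt_K]; first by rewrite -val_eqE /= inordK.
    by apply/esym/negbTE; apply: contraTneq lt_K => ->; rewrite -leqNgt.
  by rewrite inordK.
by move=> m /andP[/andP[m_gt0 _] le_K]; rewrite inordK // divn_gt0 // -ltnS.
Qed.

Lemma f_prim_mul_le n l K : 0 < l ->
  f_prim n * 2 ^ (\sum_(j <- iota 1 K) cofactor_count l n.*2 j * card_M l j)
  <= (\prod_(j <- iota 1 K) r_ l j ^ cofactor_count l n.*2 j) * 2 ^ n.*2.
Proof.
move=> l_gt0; set N := n.*2.
have sumE : \sum_(j <- iota 1 K) cofactor_count l N j * card_M l j =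
    \sum_(m < N.+1 | is_cofactor l m && (N %/ m <= K)) card_M l (N %/ m).
  rewrite big_cofactor_quotient; apply: eq_bigr => j _.
  by rewrite sum_nat_const /cofactor_count; congr (_ * _); apply: eq_card => m; rewrite inE.
have prodE : \prod_(j <- iota 1 K) r_ l j ^ cofactor_count l N j =
    \prod_(m < N.+1 | is_cofactor l m && (N %/ m <= K)) r_ l (N %/ m).
  rewrite big_cofactor_quotient; apply: eq_bigr => j _.
  by rewrite prod_nat_const /cofactor_count; congr (_ ^ _); apply: eq_card => m; rewrite inE.
rewrite sumE prodE; apply: leq_trans (leq_mul (f_prim_le n l_gt0) (leqnn _)) _.
rewrite (bigID (fun m : 'I_N.+1 => N %/ m <= K)) /= -mulnA leq_mul2l; apply/orP; right.
set large := \sum_(m < N.+1 | is_cofactor l m && ~~ (N %/ m <= K)) card_M l (N %/ m).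
apply: (@leq_trans (2 ^ large * 2 ^ (\sum_(m < N.+1 | is_cofactor l m && (N %/ m <= K))
    card_M l (N %/ m)))).
  rewrite leq_mul2r; apply/orP; right; rewrite /large expn_sum.
  by apply: leq_prod => m _; apply: r_le.
by rewrite -expnD leq_pexp2l // addnC -bigID sum_card_M_le.
Qed.

Section CountCoprime.

Variable Q : nat.

Definition count_coprime x := \sum_(0 <= m < x) coprime Q m.

Lemma count_coprimeS x : count_coprime x.+1 = count_coprime x + coprime Q x.
Proof. by rewrite /count_coprime big_nat_recr. Qed.

Lemma count_coprime_leq x : count_coprime x <= x.
Proof.
elim: x => [|x IH]; first by rewrite /count_coprime big_geq.
by rewrite count_coprimeS; case: coprime => /=; lia.
Qed.

Lemma leq_count_coprime x y : x <= y -> count_coprime x <= count_coprime y.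
Proof.
move=> le_xy; rewrite -(subnKC le_xy); elim: (y - x) => [|k IH]; first by rewrite addn0.
by rewrite addnS count_coprimeS; exact: leq_trans IH (leq_addr _ _).
Qed.

Lemma count_coprime_mull k : count_coprime (k * Q) = k * totient Q.
Proof.
have periodic x : count_coprime (x + Q) = count_coprime x + totient Q.
  elim: x => [|x IH].
    by rewrite add0n totient_count_coprime /count_coprime (big_geq (leqnn 0)).
  by rewrite addSn !count_coprimeS IH /coprime gcdnDr; lia.
elim: k => [|k IH]; first by rewrite /count_coprime big_geq.
by rewrite mulSn addnC periodic IH mulSn addnC.
Qed.

Lemma count_coprime_ge_divn x : x %/ Q * totient Q <= count_coprime x.
Proof. by rewrite -count_coprime_mull; apply/leq_count_coprime/leq_divM. Qed.

Lemma count_coprime_le_divnS x : 0 < Q -> count_coprime x <= (x %/ Q).+1 * totient Q.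
Proof.
move=> Q_gt0; rewrite -count_coprime_mull; apply: leq_count_coprime.
by rewrite mulSn {1}(divn_eq x Q) addnC leq_add2r ltnW ?ltn_pmod.
Qed.

End CountCoprime.

Lemma divn_window N j m : 0 < j -> N %/ j.+1 < m <= N %/ j -> N %/ m = j.
Proof.
move=> j_gt0 /andP[lt_am le_mb]; have m_gt0 : 0 < m by apply: leq_ltn_trans lt_am.
apply/eqP; rewrite eqn_leq -ltnS ltn_divLR // mulnC -ltn_divLR // lt_am.
by rewrite leq_divRL // mulnC -leq_divRL.
Qed.

Lemma count_coprime_window l N j : 0 < j ->
  count_coprime (primorial l) (N %/ j).+1
    <= cofactor_count l N j + count_coprime (primorial l) (N %/ j.+1).+1.
Proof.
move=> j_gt0; set a := N %/ j.+1; set b := N %/ j.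
have le_ab : a <= b by apply: leq_div2l.
have le_bN : b <= N by apply: leq_div.
rewrite /count_coprime (big_cat_nat _ (m := 0) (n := a.+1) (p := b.+1)) //= addnC leq_add2r.
have -> : cofactor_count l N j =
    \sum_(0 <= m < N.+1) (is_cofactor l m && (N %/ m == j) : nat).
  rewrite big_mkord /cofactor_count -sum1_card big_mkcond.
  by apply: eq_bigr => m _; rewrite inE; case: ifP.
rewrite (big_cat_nat _ (m := 0) (n := a.+1) (p := N.+1)) ?ltnS ?(leq_trans le_ab) //=.
rewrite (big_cat_nat _ (m := a.+1) (n := b.+1) (p := N.+1)) //=.
rewrite addnCA; apply: leq_trans _ (leq_addr _ _).
rewrite big_nat_cond [X in _ <= X]big_nat_cond.
apply: leq_sum => m /andP[/andP[lt_am le_mb] _]; rewrite ltnS in le_mb.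
by rewrite /is_cofactor (leq_ltn_trans _ lt_am) // (divn_window j_gt0) ?lt_am ?eqxx ?andbT.
Qed.

(** * Logarithmic estimates *)

Local Open Scope R_scope.

Fact Rplus_associative : associative Rplus.
Proof. by move=> x y z; rewrite Rplus_assoc. Qed.

Fact Rmult_associative : associative Rmult.
Proof. by move=> x y z; rewrite Rmult_assoc. Qed.

HB.instance Definition _ :=
  Monoid.isComLaw.Build R 0 Rplus Rplus_associative Rplus_comm Rplus_0_l.
HB.instance Definition _ :=
  Monoid.isComLaw.Build R 1 Rmult Rmult_associative Rmult_comm Rmult_1_l.
HB.instance Definition _ := Monoid.isMulLaw.Build R 0 Rmult Rmult_0_l Rmult_0_r.
HB.instance Definition _ :=
  Monoid.isAddLaw.Build R Rmult Rplus Rmult_plus_distr_r Rmult_plus_distr_l.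

Lemma INR_addn a b : INR (a + b) = INR a + INR b.
Proof. by rewrite -plusE plus_INR. Qed.

Lemma INR_double a : INR a.*2 = 2 * INR a.
Proof. by rewrite -addnn INR_addn; ring. Qed.

Lemma INR_muln a b : INR (a * b) = INR a * INR b.
Proof. by rewrite -multE mult_INR. Qed.

Lemma INR_two : INR 2 = 2.
Proof. by rewrite /=; lra. Qed.

Lemma INR_expn a b : INR (a ^ b) = INR a ^ b.
Proof. by elim: b => [|b IH] //=; rewrite expnS INR_muln IH. Qed.

Lemma INR_leq a b : (a <= b)%N -> INR a <= INR b.
Proof. by move/leP; apply: le_INR. Qed.

Lemma exp_le x y : x <= y -> exp x <= exp y.
Proof. by case/Rle_lt_or_eq_dec => [/exp_increasing/Rlt_le|->]; [|apply: Rle_refl]. Qed.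

Lemma ln_le x y : 0 < x -> x <= y -> ln x <= ln y.
Proof.
move=> x_pos; case/Rle_lt_or_eq_dec => [/(ln_increasing _ _ x_pos)/Rlt_le|->] //.
exact: Rle_refl.
Qed.

Lemma INR_sum I (s : seq I) (F : I -> nat) :
  INR (\sum_(i <- s) F i) = \big[Rplus/0]_(i <- s) INR (F i).
Proof. by apply: big_morph => [a b|]; rewrite // -plus_INR. Qed.

Lemma ln_prod I (s : seq I) (F : I -> nat) : (forall i, 0 < F i)%N ->
  ln (INR (\prod_(i <- s) F i)) = \big[Rplus/0]_(i <- s) ln (INR (F i)).
Proof.
move=> F_gt0; elim: s => [|i s IH]; first by rewrite !big_nil ln_1.
rewrite !big_cons INR_muln ln_mult ?IH //; apply/lt_0_INR/ltP => //.
by rewrite prodn_gt0.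
Qed.

Lemma exp_sum I (s : seq I) (F : I -> R) :
  exp (\big[Rplus/0]_(i <- s) F i) = \big[Rmult/1]_(i <- s) exp (F i).
Proof. by apply: big_morph => [x y|]; rewrite ?exp_plus ?exp_0. Qed.

Lemma INR_divn_le x q : (0 < q)%N -> INR (x %/ q) <= INR x / INR q.
Proof.
move=> q_gt0; have q_pos : 0 < INR q by apply/lt_0_INR/ltP.
apply: (Rmult_le_reg_r (INR q)) => //; rewrite /Rdiv Rmult_assoc Rinv_l; last lra.
by rewrite Rmult_1_r -INR_muln; apply/le_INR/leP/leq_divM.
Qed.

Lemma INR_divn_ge x q : (0 < q)%N -> INR x / INR q - 1 <= INR (x %/ q).
Proof.
move=> q_gt0; have q_pos : 0 < INR q by apply/lt_0_INR/ltP.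
have lt_x : INR x < INR (x %/ q).+1 * INR q.
  by rewrite -INR_muln; apply/lt_INR/ltP; rewrite -ltn_divLR // ltnS.
rewrite S_INR in lt_x; apply: (Rmult_le_reg_r (INR q)) => //.
rewrite Rmult_minus_distr_r /Rdiv Rmult_assoc Rinv_l; lra.
Qed.

Section CoprimeDensity.

Variable Q : nat.
Hypothesis Q_gt0 : (0 < Q)%N.

Let phi := INR (totient Q) / INR Q.

Lemma coprime_density_bounds : 0 <= phi <= 1.
Proof.
have Q_pos : 0 < INR Q by apply/lt_0_INR/ltP.
have T_le : INR (totient Q) <= INR Q.
  by apply: INR_leq; have := count_coprime_leq Q (1 * Q); rewrite count_coprime_mull !mul1n.
split; first by apply: Rle_mult_inv_pos => //; apply: pos_INR.
by apply: (Rmult_le_reg_r (INR Q)) => //; rewrite /phi /Rdiv Rmult_assoc Rinv_l; lra.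
Qed.

Let phiE x : phi * INR x = INR (totient Q) * (INR x / INR Q).
Proof. by rewrite /phi; field; apply: not_0_INR; lia. Qed.

Lemma INR_count_coprime_ge x : phi * INR x - INR (totient Q) <= INR (count_coprime Q x).
Proof.
have := INR_divn_ge x Q_gt0; have T_ge0 := pos_INR (totient Q).
have := INR_leq (count_coprime_ge_divn Q x); rewrite INR_muln.
rewrite phiE; nra.
Qed.

Lemma INR_count_coprime_le x : INR (count_coprime Q x) <= phi * INR x + INR (totient Q).
Proof.
have := INR_divn_le x Q_gt0; have T_ge0 := pos_INR (totient Q).
have := INR_leq (count_coprime_le_divnS x Q_gt0); rewrite INR_muln S_INR.
rewrite phiE; nra.
Qed.

End CoprimeDensity.

Lemma prod_one_minus_inv (s : seq nat) : all (fun p => 0 < p)%N s ->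
  \big[Rmult/1]_(p <- s) (1 - / INR p) = INR (\prod_(p <- s) p.-1) / INR (\prod_(p <- s) p).
Proof.
elim: s => [_|p s IH]; first by rewrite !big_nil /=; field.
rewrite /= => /andP[p_gt0 s_gt0]; rewrite !big_cons IH // !INR_muln.
have p_pos : 0 < INR p by apply/lt_0_INR/ltP.
have s_pos : 0 < INR (\prod_(q <- s) q).
  by apply/lt_0_INR/ltP; rewrite big_seq prodn_cond_gt0 // => q /(allP s_gt0).
have -> : INR p.-1 = INR p - 1 by rewrite -{2}(prednK p_gt0) S_INR; ring.
by field; split; lra.
Qed.

Lemma phi_lE l : phi_l l = INR (totient (primorial l)) / INR (primorial l).
Proof.
rewrite /phi_l /Rprod subSS subn0 foldrE big_map.
rewrite /primorial totient_prod_primes ?all_prime_first_primes ?uniq_first_primes //.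
rewrite -prod_one_minus_inv ?big_map //; apply/allP => p /(allP (all_prime_first_primes l)).
exact: prime_gt0.
Qed.

Lemma cofactor_count_ge l N j : (0 < j)%N ->
  phi_l l * (INR N / (INR j * (INR j + 1))) - (1 + 2 * INR (totient (primorial l)))
    <= INR (cofactor_count l N j).
Proof.
move=> j_gt0; have Q_gt0 := primorial_gt0 l; rewrite phi_lE.
have [phi_ge0 phi_le1] := coprime_density_bounds Q_gt0.
set T := INR (totient _) in phi_ge0 phi_le1 *; set phi := T / _ in phi_ge0 phi_le1 *.
have j_pos : 0 < INR j by apply/lt_0_INR/ltP.
have := INR_leq (count_coprime_window l N j_gt0); rewrite INR_addn.
have := INR_count_coprime_ge Q_gt0 (N %/ j).+1.
have := INR_count_coprime_le Q_gt0 (N %/ j.+1).+1.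
rewrite !S_INR -/T -/phi.
have b_ge := INR_divn_ge N j_gt0; have a_le := INR_divn_le N (ltn0Sn j); rewrite S_INR in a_le.
have window : INR N / INR j - 1 - INR N / (INR j + 1) = INR N / (INR j * (INR j + 1)) - 1.
  by field; lra.
have : phi * (INR (N %/ j) - INR (N %/ j.+1)) >= phi * (INR N / (INR j * (INR j + 1)) - 1).
  by apply: Rmult_ge_compat_l; lra.
nra.
Qed.

Lemma Rsum_le (I : eqType) (s : seq I) (F G : I -> R) : (forall i, i \in s -> F i <= G i) ->
  \big[Rplus/0]_(i <- s) F i <= \big[Rplus/0]_(i <- s) G i.
Proof.
move=> le_FG; rewrite big_seq [X in _ <= X]big_seq.
by apply: (big_ind2 Rle) => [|x1 x2 y1 y2|i /le_FG]; lra.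
Qed.

Definition log_deficit l i := ln (INR (r_ l i)) - INR (card_M l i) * ln 2.

Lemma log_deficit_le0 l i : log_deficit l i <= 0.
Proof.
have := INR_leq (r_le l i); rewrite INR_expn INR_two => le_r.
have := ln_le (lt_0_INR _ (ltP (r_gt0 l i))) le_r; rewrite ln_pow /log_deficit; lra.
Qed.

Lemma ln_f_prim_le l K n : (0 < l)%N ->
  ln (INR (f_prim n)) <=
  \big[Rplus/0]_(j <- iota 1 K) (INR (cofactor_count l n.*2 j) * log_deficit l j)
    + INR n.*2 * ln 2.
Proof.
move=> l_gt0; have := INR_leq (f_prim_mul_le n K l_gt0).
set S := (\sum_(j <- iota 1 K) cofactor_count l n.*2 j * card_M l j)%N.
set P := (\prod_(j <- iota 1 K) r_ l j ^ cofactor_count l n.*2 j)%N.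
rewrite !INR_muln !INR_expn INR_two => le_fP.
have f_pos : 0 < INR (f_prim n) by apply/lt_0_INR/ltP/f_prim_gt0.
have P_pos : 0 < INR P by apply/lt_0_INR/ltP; rewrite prodn_gt0 // => j; rewrite expn_gt0 r_gt0.
have pow2_pos k : 0 < 2 ^ k by apply: pow_lt; lra.
have := ln_le (Rmult_lt_0_compat _ _ f_pos (pow2_pos S)) le_fP.
rewrite !ln_mult ?ln_pow ?pow2_pos //; [|lra..].
rewrite /P ln_prod => [|j]; last by rewrite expn_gt0 r_gt0.
rewrite /S INR_sum.
have -> : \big[Rplus/0]_(j <- iota 1 K) (INR (cofactor_count l n.*2 j) * log_deficit l j) =
    \big[Rplus/0]_(j <- iota 1 K) ln (INR (r_ l j ^ cofactor_count l n.*2 j))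
    + - ln 2 * \big[Rplus/0]_(j <- iota 1 K) INR (cofactor_count l n.*2 j * card_M l j).
  rewrite big_distrr -big_split /=; apply: eq_bigr => j _.
  rewrite INR_expn ln_pow ?INR_muln /log_deficit; first ring.
  exact/lt_0_INR/ltP/r_gt0.
lra.
Qed.

Definition cofactor_density l j := 2 / (INR j * (INR j + 1)) * phi_l l.

Lemma ln_f_prim_le_linear l K n : (0 < l)%N ->
  ln (INR (f_prim n)) <=
  INR n * (\big[Rplus/0]_(j <- iota 1 K) (cofactor_density l j * log_deficit l j) + 2 * ln 2)
  - (1 + 2 * INR (totient (primorial l))) * \big[Rplus/0]_(j <- iota 1 K) log_deficit l j.
Proof.
move=> l_gt0; apply: Rle_trans (ln_f_prim_le K n l_gt0) _.
set E := 1 + 2 * INR (totient (primorial l)).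
have sum_le : \big[Rplus/0]_(j <- iota 1 K) (INR (cofactor_count l n.*2 j) * log_deficit l j)
    <= \big[Rplus/0]_(j <- iota 1 K) ((INR n * cofactor_density l j - E) * log_deficit l j).
  apply: Rsum_le => j; rewrite mem_iota => /andP[j_gt0 _].
  rewrite !(Rmult_comm _ (log_deficit l j)).
  apply: Rmult_le_compat_neg_l; first exact: log_deficit_le0.
  have := cofactor_count_ge l n.*2 j_gt0; rewrite INR_double.
  have j_pos : 0 < INR j by apply/lt_0_INR/ltP.
  have -> : phi_l l * (2 * INR n / (INR j * (INR j + 1))) = INR n * cofactor_density l j.
    by rewrite /cofactor_density; field; lra.
  by rewrite /E; lra.
have sum_eq :
    \big[Rplus/0]_(j <- iota 1 K) ((INR n * cofactor_density l j - E) * log_deficit l j) =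
    INR n * \big[Rplus/0]_(j <- iota 1 K) (cofactor_density l j * log_deficit l j)
    + - E * \big[Rplus/0]_(j <- iota 1 K) log_deficit l j.
  by rewrite !big_distrr -big_split /=; apply: eq_bigr => j _; ring.
rewrite INR_double; lra.
Qed.

Lemma c_eta_exp l K : c_ l K * Rpower 2 (eta_ l K) =
  exp (\big[Rplus/0]_(j <- iota 1 K) (cofactor_density l j * log_deficit l j) + 2 * ln 2).
Proof.
rewrite /c_ /eta_ /Rprod /Rsum subSS subn0 !foldrE !big_map /Rpower -exp_sum -exp_plus.
congr exp; rewrite /log_deficit /cofactor_density.
rewrite [in RHS](eq_bigr (fun j => 2 / (INR j * (INR j + 1)) * phi_l l * ln (INR (r_ l j))
  + - ln 2 * (2 / (INR j * (INR j + 1)) * phi_l l * INR (card_M l j)))) => [|j _]; last ring.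
rewrite big_split /= -big_distrr /=; ring.
Qed.

Lemma limsup_root_le_exp (a : nat -> R) L D : (forall n, 0 < a n) ->
  (forall n, ln (a n) <= INR n * L + D) ->
  limsup_le (fun n => Rpower (a n) (1 / INR n)) (exp L).
Proof.
move=> a_pos ln_a eps eps_pos.
have eL_pos := exp_pos L.
have ratio_pos := Rdiv_lt_0_compat _ _ eps_pos eL_pos.
set d := ln (1 + eps / exp L).
have d_pos : 0 < d by rewrite /d -ln_1; apply: ln_increasing; lra.
have [N0 N0_large] := INR_archimed d D d_pos.
exists (maxn N0 1) => n; rewrite geq_max => /andP[le_N0n n_gt0].
have n_pos : 0 < INR n by apply/lt_0_INR/ltP.
have le_Dd : D <= INR n * d by have := INR_leq le_N0n; nra.
apply: Rle_trans (_ : exp (L + d) <= _).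
  apply: exp_le; apply: (Rmult_le_reg_l (INR n)) => //.
  rewrite -Rmult_assoc /Rdiv Rmult_1_l Rinv_r; last lra.
  by have := ln_a n; nra.
rewrite exp_plus /d exp_ln; last lra.
by rewrite Rmult_plus_distr_l Rmult_1_r /Rdiv Rmult_comm Rmult_assoc Rinv_l; lra.
Qed.

Unset Implicit Arguments.

Theorem mainTheorem8 (l K : nat) (hl : (1 <= l)%nat) (hK : (1 <= K)%nat) :
  limsup_le (fun n : nat => Rpower (INR (f_prim n)) (1 / INR n))
            (c_ l K * Rpower 2 (eta_ l K)).
Proof.
rewrite c_eta_exp; apply: limsup_root_le_exp => [n|n].
  exact/lt_0_INR/ltP/f_prim_gt0.
exact: ln_f_prim_le_linear.
Qed.
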